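(* Let $V\subseteq R_d$ be a Gotzmann monomial vector space with $x_i$-decomposition $V=V_0\oplus x_iV_1$ and $x_i$-compression $L=L_0\oplus x_iL_1$. If $\mathbf n_1L_1\subseteq L_0$, then for every monomial $m\in V$ divisible by $x_i$ and every variable $x_j$ not dividing $m$, the monomial $\frac{x_j}{x_i}m$ lies in $V$.
   Context: Let $\Bbbk$ be a field, $R=\Bbbk[x_1,\dots,x_n]/(x_1^2,\dots,x_n^2)$, $R_d$ its degree-$d$ component. A monomial vector space is a subspace of some $R_d$ spanned by monomials; $\mathbf m_1V$ is the span of $\{x_jm\}$ over monomials $m\in V$ and all $j$. A subspace $V\subseteq R_d$ is Gotzmann if $|\mathbf m_1V|\le|\mathbf m_1W|$ for every subspace $W\subseteq R_d$ with $|W|=|V|$ ($|\cdot|$ = dimension). Fix $x_i$, let $Q=R/(x_i)$, with $\mathbf n_1W$ the span of $\{x_jm: j\neq i, m\in W\text{ monomial}\}$. A lex segment of $Q_e$ is a space spanned by an initial segment of the squarefree degree-$e$ monomials of $Q$ in lexicographic order (variables ordered $x_1>\dots>x_n$, omitting $x_i$). The $x_i$-decomposition of $V$ is $V=V_0\oplus x_iV_1$, with $V_0\subseteq Q_d$ spanned by the monomials of $V$ not divisible by $x_i$ and $V_1\subseteq Q_{d-1}$ spanned by the monomials $m$ with $x_im\in V$. The $x_i$-compression of $V$ is $L=L_0\oplus x_iL_1$, where $L_0\subseteq Q_d$, $L_1\subseteq Q_{d-1}$ are the lex segments with $|L_0|=|V_0|$, $|L_1|=|V_1|$. *)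

From HB Require Import structures.
From mathcomp Require Import all_boot all_order all_algebra.
Set Implicit Arguments. Unset Strict Implicit. Unset Printing Implicit Defensive.
Import GRing.Theory.
Local Open Scope ring_scope.

(* R = k[x_1..x_n]/(x_1^2,..,x_n^2) as a k-vector space: a vector is a
   function from squarefree monomials (= subsets of 'I_n) to k.
   Variable x_{j+1} of the paper is index j : 'I_n. *)
Section Exterior.
Variables (K : fieldType) (n : nat).

Definition Rvec := {ffun {set 'I_n} -> K^o}.

Definition mono (M : {set 'I_n}) : Rvec := [ffun N : {set 'I_n} => (N == M)%:R].

Definition mspan (A : {set {set 'I_n}}) : {vspace Rvec} :=
  <<[seq mono M | M <- enum A]>>%VS.

Definition Rdeg (d : nat) : {vspace Rvec} := mspan [set M : {set 'I_n} | #|M| == d].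

(* multiplication by x_j : x_j * m_T = m_{N u {j}} if j \notin N, else 0 *)
Definition xmul_fun (j : 'I_n) (f : Rvec) : Rvec :=
  [ffun M : {set 'I_n} => if j \in M then f (M :\ j) else 0].

Lemma xmul_fun_linear j : linear (xmul_fun j).
Proof.
move=> a f g; apply/ffunP => M; rewrite /xmul_fun !ffunE.
case: (j \in M); rewrite ?ffunE //. by rewrite scaler0 addr0.
Qed.

Definition xmul (j : 'I_n) : 'End(Rvec) := linfun (xmul_fun j).

Definition m1 (W : {vspace Rvec}) : {vspace Rvec} :=
  (\sum_(j : 'I_n) (xmul j @: W))%VS.

Definition n1 (i : 'I_n) (W : {vspace Rvec}) : {vspace Rvec} :=
  (\sum_(j : 'I_n | j != i) (xmul j @: W))%VS.

Definition gotzmann (d : nat) (V : {vspace Rvec}) : Prop :=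
  (V <= Rdeg d)%VS /\
  forall W : {vspace Rvec}, (W <= Rdeg d)%VS -> \dim W = \dim V ->
    (\dim (m1 V) <= \dim (m1 W))%N.

Definition monomial_space (d : nat) (V : {vspace Rvec}) : Prop :=
  exists2 A : {set {set 'I_n}}, (forall M : {set 'I_n}, M \in A -> #|M| = d) & V = mspan A.

(* lexicographic order on squarefree monomials (x_1 > ... > x_n):
   M >lex N iff the smallest index where they differ belongs to M *)
Definition lexgt (M N : {set 'I_n}) : bool :=
  [exists x : 'I_n, [&& x \in M, x \notin N &
     [forall y : 'I_n, (y < x)%N ==> ((y \in M) == (y \in N))]]].

(* squarefree degree-e monomials of Q = R/(x_i) *)
Definition Qmonos (i : 'I_n) (e : nat) : {set {set 'I_n}} :=
  [set M : {set 'I_n} | (i \notin M) && (#|M| == e)].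

Definition lexseg (i : 'I_n) (e k : nat) : {set {set 'I_n}} :=
  [set M in Qmonos i e | #|[set N in Qmonos i e | lexgt N M]| < k]%N.

Definition V0monos (i : 'I_n) (V : {vspace Rvec}) : {set {set 'I_n}} :=
  [set M : {set 'I_n} | (i \notin M) && (mono M \in V)].
Definition V1monos (i : 'I_n) (V : {vspace Rvec}) : {set {set 'I_n}} :=
  [set M : {set 'I_n} | (i \notin M) && (mono (i |: M) \in V)].

Definition L0 (i : 'I_n) (d : nat) (V : {vspace Rvec}) : {vspace Rvec} :=
  mspan (lexseg i d #|V0monos i V|).
Definition L1 (i : 'I_n) (d : nat) (V : {vspace Rvec}) : {vspace Rvec} :=
  mspan (lexseg i d.-1 #|V1monos i V|).

End Exterior.

From HB Require Import structures.
From mathcomp Require Import all_boot all_order all_algebra.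
Set Implicit Arguments. Unset Strict Implicit. Unset Printing Implicit Defensive.

(* Identify a monomial space with its set A of supports, and split A at x_i
   into its deletion A0 (supports of V_0) and link A1 (supports of V_1).
   Sorting m_1 V by divisibility by x_i gives
     |m_1 V| = |n_1 V_0| + |V_0 + n_1 V_1|,
   and likewise for the compression L.  Lex segments minimise the upper shadow
   n_1 (a Kruskal-Katona theorem, proved with Frankl's (U,V)-compressions and a
   lex-weight potential), so |n_1 L_0| <= |n_1 V_0|; together with
   n_1 L_1 <= L_0 this gives |m_1 L| = |n_1 L_0| + |V_0|.  Gotzmann minimality
   |m_1 V| <= |m_1 L| then forces |V_0 + n_1 V_1| <= |V_0|, i.e.
   n_1 V_1 <= V_0, which is the claim for m = x_i m'. *)

Section Compression.
Variable T : finType.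
Implicit Types (F : {set {set T}}) (B X U V : {set T}).

Definition compressible U V B := [disjoint U & B] && (V \subset B).

Definition compress U V B := if compressible U V B then B :\: V :|: U else B.

Lemma compressE U V B : compressible U V B -> compress U V B = B :\: V :|: U.
Proof. by rewrite /compress => ->. Qed.

Lemma compress_id U V B : ~~ compressible U V B -> compress U V B = B.
Proof. by rewrite /compress => /negbTE ->. Qed.

Lemma compress_moved U V B : compress U V B != B -> compressible U V B.
Proof. by apply: contraR => /compress_id ->. Qed.

Lemma compressK U V B : compressible U V B -> compress U V B :\: U :|: V = B.
Proof.
move=> cB; have /andP[dUB /subsetP VB] := cB; rewrite compressE //.
apply/setP => x; rewrite !inE; case xV: (x \in V); first by rewrite orbT VB.
by case xU: (x \in U); rewrite /= ?orbF ?andbT // (disjointFr dUB xU).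
Qed.

Lemma compress_idem U V B : compress U V (compress U V B) = compress U V B.
Proof.
case: (boolP (compressible U V B)) => [cB|nB]; last by rewrite !compress_id.
case: (boolP (compressible U V (compress U V B))) => [cC|/compress_id //].
rewrite [compress U V B]compressE // in cC *; rewrite compressE //; have /andP[dU _] := cC.
have U0 x : x \in U = false.
  by apply/negP => xU; move: (disjointFr dU xU); rewrite !inE xU orbT.
apply/setP => x; rewrite !inE U0 !orbF; by case: (x \in V).
Qed.

Lemma compress_inj_in U V :
  {in [pred B | compress U V B != B] &, injective (compress U V)}.
Proof.
move=> B1 B2; rewrite !inE => /compress_moved c1 /compress_moved c2 e.
by rewrite -(compressK c1) -(compressK c2) e.
Qed.

Lemma compress0 B : compress set0 set0 B = B.
Proof. by rewrite /compress; case: ifP; rewrite ?setD0 ?setU0. Qed.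

Definition compress_rel F U V B := if compress U V B \in F then B else compress U V B.

Definition compress_family U V F := [set compress_rel F U V B | B in F].

Lemma compress_rel_inj U V F : {in F &, injective (compress_rel F U V)}.
Proof.
move=> B1 B2 B1F B2F; rewrite /compress_rel.
case: ifPn => c1; case: ifPn => c2 // e.
- by rewrite -e B1F in c2.
- by rewrite e B2F in c1.
by apply: compress_inj_in e; rewrite inE; [apply: contraNneq c1 | apply: contraNneq c2] => ->.
Qed.

Lemma card_compress_family U V F : #|compress_family U V F| = #|F|.
Proof. exact/card_in_imset/compress_rel_inj. Qed.

Lemma compress_family_kept U V F X :
  X \in F -> compress U V X \in F -> X \in compress_family U V F.
Proof. by move=> XF cXF; apply/imsetP; exists X; rewrite // /compress_rel cXF. Qed.

Lemma compress_family_moved U V F B :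
  B \in F -> compress U V B \notin F -> compress U V B \in compress_family U V F.
Proof. by move=> BF cBF; apply/imsetP; exists B; rewrite // /compress_rel (negbTE cBF). Qed.

Lemma compress_family_cases U V F X : X \in compress_family U V F ->
  X \in F /\ compress U V X \in F \/
  exists B, [/\ B \in F, compress U V B \notin F & X = compress U V B].
Proof.
case/imsetP => B BF ->; rewrite /compress_rel.
by case: ifPn => cBF; [left | right; exists B].
Qed.

Lemma compress_family_compress U V F X :
  X \in compress_family U V F -> compress U V X \in compress_family U V F.
Proof.
case/compress_family_cases => [[XF cXF]|[B [BF cBF ->]]].
  by apply: compress_family_kept; rewrite ?compress_idem.
by rewrite compress_idem; apply: compress_family_moved.
Qed.

Lemma compress_stable U V F X :
  compress_family U V F = F -> X \in F -> compress U V X \in F.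
Proof. by move=> eF; rewrite -{1 2}eF; apply: compress_family_compress. Qed.

Lemma compress_family0 F : compress_family set0 set0 F = F.
Proof.
rewrite -[RHS]imset_id; apply: eq_in_imset => B BF.
by rewrite /compress_rel compress0 BF.
Qed.

End Compression.

Section UpShadow.
Variable T : finType.
Implicit Types (P : pred T) (F : {set {set T}}) (X : {set T}).

Definition up_shadow P F := [set X : {set T} | [exists j, [&& P j, j \in X & X :\ j \in F]]].

Lemma up_shadowP P F X :
  reflect (exists j, [/\ P j, j \in X & X :\ j \in F]) (X \in up_shadow P F).
Proof.
rewrite inE; apply: (iffP existsP) => [[j /and3P[]]|[j []]]; last first.
  by exists j; apply/and3P.
by exists j.
Qed.

Lemma mem_up_shadow P F X j : P j -> j \in X -> X :\ j \in F -> X \in up_shadow P F.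
Proof. by move=> Pj jX XjF; apply/up_shadowP; exists j. Qed.

Lemma setU1_up_shadow P F X j : P j -> j \notin X -> X \in F -> j |: X \in up_shadow P F.
Proof. by move=> Pj jX XF; apply: (mem_up_shadow Pj); rewrite ?setU11 ?setU1K. Qed.

End UpShadow.

Section ShadowCompression.
Variables (T : finType) (i : T) (U V : {set T}) (A : {set {set T}}).
Hypotheses (iU : i \notin U) (cardUV : #|U| = #|V|).
Hypothesis stableA :
  forall y, y \in V -> exists2 x, x \in U & compress_family (U :\ x) (V :\ y) A = A.

Local Notation C := (compress U V).
Local Notation sh := (up_shadow (predC1 i)).

(* Removing a suitable x from this set yields the (U :\ x, V :\ y)-compression
   of W, which lies in A by [stableA]. *)
Lemma compress_shift_up_shadow y W :
  y \in V -> W \in A -> [disjoint U & W] -> V :\ y \subset W ->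
  W :\: (V :\ y) :|: U \in sh A.
Proof.
move=> yV WA dUW VyW; have [x xU eA] := stableA yV.
have cW : compressible (U :\ x) (V :\ y) W.
  by rewrite /compressible VyW andbT; apply: disjointWl dUW; apply: subD1set.
apply: (@mem_up_shadow _ _ _ _ x); first by apply: contraNneq iU => <-.
  by rewrite !inE xU orbT.
have -> : (W :\: (V :\ y) :|: U) :\ x = compress (U :\ x) (V :\ y) W.
  rewrite compressE //; apply/setP => z; rewrite !inE.
  by case: (eqVneq z x) => [->|//]; rewrite (disjointFr dUW xU) andbF.
exact: compress_stable eA WA.
Qed.

Lemma up_shadow_compress_kept X z :
  X \in A -> C X \in A -> z != i -> z \notin X ->
  z |: X \in compress_family U V (sh A).
Proof.
move=> XA cXA zi zX; apply: compress_family_kept; first exact: setU1_up_shadow.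
case: (boolP (compressible U V (z |: X))) => [cZ|/compress_id ->]; last first.
  exact: setU1_up_shadow.
have /andP[dUZ /subsetP VZ] := cZ.
have dUX : [disjoint U & X] by apply: disjointWr dUZ; apply: subsetUr.
have zU : z \notin U by apply/negP => /(disjointFr dUZ); rewrite setU11.
rewrite compressE //; case: (boolP (z \in V)) => [zV|zV].
  have -> : (z |: X) :\: V :|: U = X :\: (V :\ z) :|: U.
    apply/setP => y; rewrite !inE; case: eqVneq => [->|_] /=; last by [].
    by rewrite zV /= (negbTE zX) (negbTE zU).
  apply: compress_shift_up_shadow zV XA dUX _; apply/subsetP => y.
  by rewrite !inE => /andP[yz /VZ]; rewrite !inE (negbTE yz).
have cX : compressible U V X.
  rewrite /compressible dUX; apply/subsetP => y yV.
  by have := VZ y yV; rewrite !inE; case: eqVneq yV zV => [->|] // ->.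
have -> : (z |: X) :\: V :|: U = z |: C X.
  by rewrite compressE //; apply/setP => y; rewrite !inE; case: eqVneq => [->|]; rewrite ?zV.
by apply: setU1_up_shadow; rewrite // compressE // !inE (negbTE zX) (negbTE zU) andbF.
Qed.

Lemma up_shadow_compress_moved B z :
  B \in A -> C B \notin A -> z != i -> z \notin C B ->
  z |: C B \in compress_family U V (sh A).
Proof.
move=> BA cBA zi zC.
have cB : compressible U V B by apply: compress_moved; apply: contraNneq cBA => ->.
have /andP[dUB VB] := cB; have CB := compressE cB.
have [u uU] : exists u, u \in U.
  case: (set_0Vmem U) => [U0|[u]]; last by exists u.
  have V0 : V = set0 by apply/eqP; rewrite -cards_eq0 -cardUV U0 cards0.
  by move: cBA; rewrite U0 V0 compress0 BA.
have cZ : C (z |: C B) = z |: C B.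
  apply: compress_id; apply/negP => /andP[/disjointFr/(_ uU)].
  by rewrite CB !inE uU !orbT.
have zU : z \notin U by apply: contra zC; rewrite CB inE => ->; rewrite orbT.
case: (boolP (z \in V)) => [zV|zV].
  suff ZA : z |: C B \in sh A by apply: compress_family_kept; rewrite ?cZ.
  have -> : z |: C B = B :\: (V :\ z) :|: U.
    apply/setP => y; rewrite CB !inE.
    by case: eqVneq => [->|]; rewrite ?zV ?(subsetP VB z zV).
  by apply: compress_shift_up_shadow zV BA dUB _; apply: subset_trans VB; apply: subD1set.
have zB : z \notin B by apply: contra zC; rewrite CB !inE zV => ->.
have WA : z |: B \in sh A by apply: setU1_up_shadow.
have cW : C (z |: B) = z |: C B.
  rewrite !compressE //; last first.
    rewrite /compressible (subset_trans VB (subsetUr _ _)) andbT.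
    apply/pred0P => y /=; rewrite !inE; case: (boolP (y \in U)) => // yU.
    by rewrite (disjointFr dUB yU) orbF; apply: contraNF zU => /eqP <-.
  by apply/setP => y; rewrite !inE; case: eqVneq => [->|]; rewrite ?zV.
case: (boolP (z |: C B \in sh A)) => ZA; first by apply: compress_family_kept; rewrite ?cZ.
by rewrite -cW; apply: compress_family_moved; rewrite ?cW.
Qed.

Lemma up_shadow_compress_family :
  sh (compress_family U V A) \subset compress_family U V (sh A).
Proof.
apply/subsetP => Z /up_shadowP[z [zi zZ XF]]; rewrite -(setD1K zZ).
have zX : z \notin Z :\ z by rewrite setD11.
case/compress_family_cases: XF => [[XA cXA]|[B [BA cBA eX]]].
  exact: up_shadow_compress_kept.
by rewrite eX in zX *; apply: up_shadow_compress_moved.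
Qed.

End ShadowCompression.

Section LexOrder.
Variable n : nat.
Implicit Types M N P : {set 'I_n}.

Lemma lexgtP M N : reflect (exists x, [/\ x \in M, x \notin N &
     forall y : 'I_n, (y < x)%N -> (y \in M) = (y \in N)]) (lexgt M N).
Proof.
apply: (iffP existsP) => [[x /and3P[xM xN /forallP agree]]|[x [xM xN agree]]].
  by exists x; split=> // y yx; apply/eqP; have := agree y; rewrite yx.
by exists x; rewrite xM xN; apply/forallP => y; apply/implyP => /agree ->.
Qed.

Lemma lexgt_irr M : ~~ lexgt M M.
Proof. by apply/negP => /lexgtP[x [xM xM' _]]; rewrite xM in xM'. Qed.

Lemma lexgt_trans N M P : lexgt M N -> lexgt N P -> lexgt M P.
Proof.
move=> /lexgtP[x [xM xN hx]] /lexgtP[y [yN yP hy]]; apply/lexgtP.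
case: (ltngtP x y) => [xy|yx|/val_inj exy].
- exists x; split=> //; first by rewrite -(hy x xy).
  by move=> z zx; rewrite hx // hy // (ltn_trans zx xy).
- exists y; split=> //; first by rewrite hx.
  by move=> z zy; rewrite hx ?(ltn_trans zy yx) // hy.
- by rewrite exy yN in xN.
Qed.

Lemma lexgt_total M N : M != N -> lexgt M N || lexgt N M.
Proof.
move=> neMN; have [x0 dx0] : exists x, (x \in M) != (x \in N).
  apply/existsP; apply: contraR neMN; rewrite negb_exists => /forallP eqMN.
  by apply/eqP/setP => x; apply/eqP; rewrite -[_ == _]negbK eqMN.
case: (@arg_minnP _ x0 (fun x => (x \in M) != (x \in N)) val dx0) => x dx xmin.
have agree (y : 'I_n) : (y < x)%N -> (y \in M) = (y \in N).
  by move=> yx; apply/eqP; apply: contraTT yx => /xmin; rewrite -leqNgt.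
case xM: (x \in M) dx; case xN: (x \in N) => // _; apply/orP; [left|right];
  by apply/lexgtP; exists x; rewrite ?xM ?xN; split=> // y /agree.
Qed.

End LexOrder.

Section KruskalKatona.
Variables (n : nat) (i : 'I_n) (e : nat).
Implicit Types (F : {set {set 'I_n}}) (B X Y U V : {set 'I_n}).

Local Notation Q := (Qmonos i e).
Local Notation sh := (up_shadow (predC1 i)).

Lemma mem_Qmonos B : (B \in Q) = (i \notin B) && (#|B| == e).
Proof. by rewrite inE. Qed.

Definition lexrank X := #|[set Y in Q | lexgt Y X]|.

Definition lexweight F := \sum_(X in F) lexrank X.

(* Compressing along such a pair moves a set up in the lex order, since the
   least element of [U :|: V] enters it. *)
Definition lex_pair U V := [&& i \notin U, i \notin V, #|U| == #|V| &
  [exists u in U, [forall y in U :|: V, (u <= y)%N]]].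

Lemma compress_Qmonos U V B :
  i \notin U -> #|U| = #|V| -> B \in Q -> compress U V B \in Q.
Proof.
move=> iU cardUV; case: (boolP (compressible U V B)) => [cB|/compress_id -> //].
have /andP[dUB VB] := cB; rewrite compressE // !mem_Qmonos => /andP[iB /eqP <-].
rewrite !inE negb_or negb_and iB iU orbT /= cardsU.
rewrite (disjoint_setI0 (disjointWl (subsetDl B V) _)) 1?disjoint_sym //.
by rewrite cards0 subn0 cardsD (setIidPr VB) cardUV subnK ?subset_leq_card.
Qed.

Lemma compress_family_Qmonos U V F :
  i \notin U -> #|U| = #|V| -> F \subset Q -> compress_family U V F \subset Q.
Proof.
move=> iU cardUV /subsetP FQ; apply/subsetP => _ /imsetP[B BF ->].
by rewrite /compress_rel; case: ifP => _; rewrite ?compress_Qmonos ?FQ.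
Qed.

Lemma compress_lexgt U V B :
  lex_pair U V -> compressible U V B -> lexgt (compress U V B) B.
Proof.
case/and4P=> _ _ _ /exists_inP[u uU /forall_inP umin] cB.
have /andP[dUB VB] := cB; rewrite compressE //; apply/lexgtP; exists u.
split; [by rewrite inE uU orbT | by rewrite (disjointFr dUB uU) |].
move=> y yu; have yUV : y \notin U :|: V by apply: contraL yu => /umin; rewrite -leqNgt.
by move: yUV; rewrite !inE negb_or => /andP[/negbTE -> /negbTE ->]; rewrite orbF.
Qed.

Lemma lexrank_lt B X : X \in Q -> lexgt X B -> lexrank X < lexrank B.
Proof.
move=> XQ XB; apply: proper_card; apply/properP; split.
  apply/subsetP => Y; rewrite !inE => /andP[-> YX] /=; exact: lexgt_trans YX XB.
by exists X; rewrite inE XQ ?XB ?(negbTE (lexgt_irr X)).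
Qed.

Lemma lexweight_compress_lt U V F : lex_pair U V -> F \subset Q ->
  compress_family U V F != F -> lexweight (compress_family U V F) < lexweight F.
Proof.
move=> UV /subsetP FQ neF; have /and4P[iU _ /eqP cardUV _] := UV.
have [B BF cBF] : exists2 B, B \in F & compress U V B \notin F.
  apply/exists_inP; apply: contraR neF => /exists_inPn kept; apply/eqP.
  rewrite -[RHS]imset_id; apply: eq_in_imset => B BF.
  by rewrite /compress_rel (negbNE (kept B BF)).
have rank_lt X : X \in F -> compress U V X \notin F ->
    lexrank (compress U V X) < lexrank X.
  move=> XF cXF; apply: lexrank_lt; first by rewrite compress_Qmonos ?FQ.
  by apply/compress_lexgt/compress_moved => //; apply: contraNneq cXF => ->.
rewrite /lexweight big_imset /=; last exact: compress_rel_inj.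
rewrite (bigD1 B) // [X in _ < X](bigD1 B) //= -addSn /compress_rel (negbTE cBF).
rewrite leq_add ?rank_lt //; apply: leq_sum => X /andP[XF _].
by case: ifPn => // cXF; rewrite ltnW ?rank_lt.
Qed.

Lemma lex_pair_shrink F U V : lex_pair U V ->
  (forall U' V', lex_pair U' V' -> #|U'| < #|U| -> compress_family U' V' F = F) ->
  forall y, y \in V -> exists2 x, x \in U & compress_family (U :\ x) (V :\ y) F = F.
Proof.
case/and4P=> iU iV /eqP cardUV /exists_inP[u uU /forall_inP umin] stable y yV.
have cardUu : #|U| = #|U :\ u|.+1 by rewrite (cardsD1 u U) uU.
have cardVy : #|V| = #|V :\ y|.+1 by rewrite (cardsD1 y V) yV.
have [Uu0|[x]] := set_0Vmem (U :\ u).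
  have Vy0 : V :\ y = set0.
    by apply/eqP; rewrite -cards_eq0 -eqSS -cardVy -cardUV cardUu Uu0 cards0.
  by exists u; rewrite // Uu0 Vy0 compress_family0.
rewrite !inE => /andP[xu xU]; exists x => //.
have cardUx : #|U| = #|U :\ x|.+1 by rewrite (cardsD1 x U) xU.
apply: stable; last by rewrite cardUx.
apply/and4P; split; rewrite ?inE ?negb_and ?iU ?iV ?orbT //.
  by rewrite -eqSS -cardUx cardUV cardVy.
apply/exists_inP; exists u; first by rewrite !inE eq_sym xu.
apply/forall_inP => z; rewrite !inE => /orP[] /andP[_ zUV];
  by apply: umin; rewrite inE zUV ?orbT.
Qed.

Lemma lex_stable_upward_closed F : F \subset Q ->
  (forall U V, lex_pair U V -> compress_family U V F = F) ->
  forall B X, B \in F -> X \in Q -> lexgt X B -> X \in F.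
Proof.
move=> /subsetP FQ stable B X BF XQ XB; have /lexgtP[x [xX xB xmin]] := XB.
move: (FQ B BF) XQ; rewrite !mem_Qmonos => /andP[iB /eqP cardB] /andP[iX /eqP cardX].
have cB : compressible (X :\: B) (B :\: X) B.
  rewrite /compressible subsetDl andbT -setI_eq0; apply/eqP/setP => y.
  by rewrite !inE; case: (y \in B); rewrite ?andbF.
have -> : X = compress (X :\: B) (B :\: X) B.
  by rewrite compressE //; apply/setP => y; rewrite !inE; case: (y \in X); case: (y \in B).
apply: compress_stable BF; apply: stable; apply/and4P; split.
- by rewrite !inE negb_and iX orbT.
- by rewrite !inE negb_and iB orbT.
- by rewrite !cardsD cardB cardX setIC.
apply/exists_inP; exists x; first by rewrite !inE xB xX.
apply/forall_inP => y yXB; rewrite leqNgt; apply/negP => /xmin.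
by move: yXB; rewrite !inE; case: (y \in X); case: (y \in B).
Qed.

Lemma upward_closed_lexseg F : F \subset Q ->
  (forall B X, B \in F -> X \in Q -> lexgt X B -> X \in F) -> F = lexseg i e #|F|.
Proof.
move=> /subsetP FQ up; apply/setP => M; rewrite inE -/(lexrank M).
have [MF|MF] := boolP (M \in F).
  rewrite FQ //=; apply/esym/proper_card/properP; split.
    by apply/subsetP => N; rewrite inE => /andP[NQ NM]; apply: up NQ NM.
  by exists M; rewrite // inE (negbTE (lexgt_irr M)) andbF.
case: (boolP (M \in Q)) => //= MQ; apply/esym/negbTE; rewrite -leqNgt.
apply/subset_leq_card/subsetP => N NF; rewrite inE FQ //=.
have /lexgt_total/orP[//|MN] : N != M by apply: contraNneq MF => <-.
by have := up _ _ NF MQ MN; rewrite (negbTE MF).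
Qed.

Theorem kruskal_katona (A : {set {set 'I_n}}) : A \subset Q ->
  #|lexseg i e #|A| | = #|A| /\ #|sh (lexseg i e #|A|)| <= #|sh A|.
Proof.
move=> AQ.
pose admissible (F : {set {set 'I_n}}) :=
  [&& F \subset Q, #|F| == #|A| & #|sh F| <= #|sh A|].
have admA : admissible A by rewrite /admissible AQ eqxx leqnn.
case: (arg_minnP lexweight admA) => F /and3P[FQ /eqP cardF shF] Fmin.
(* Induction on #|U| provides the stability hypothesis of
   up_shadow_compress_family for the smaller pairs (U :\ x, V :\ y). *)
have stable U V : lex_pair U V -> compress_family U V F = F.
  move: {2}#|U| (erefl #|U|) => k; elim/ltn_ind: k U V => k IH U V cardU UV.
  apply/eqP; apply: contraT => neF; have /and4P[iU _ /eqP cardUV _] := UV.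
  have shrink : forall y, y \in V ->
      exists2 x, x \in U & compress_family (U :\ x) (V :\ y) F = F.
    move=> y yV; apply: (lex_pair_shrink UV _ yV) => U' V' UV' ltU.
    by apply: (IH #|U'|); rewrite -?cardU.
  have : admissible (compress_family U V F).
    rewrite /admissible compress_family_Qmonos // card_compress_family cardF eqxx /=.
    apply: leq_trans shF; rewrite -(card_compress_family U V (sh F)).
    exact/subset_leq_card/(up_shadow_compress_family iU cardUV shrink).
  by move/Fmin; rewrite leqNgt lexweight_compress_lt.
by rewrite -cardF -upward_closed_lexseg //; exact: lex_stable_upward_closed.
Qed.

End KruskalKatona.

Section DeletionLink.
Variables (T : finType) (i : T).
Implicit Types (F G H : {set {set T}}) (X Y : {set T}).

Local Notation sh := (up_shadow (predC1 i)).

Definition deletion F := [set X : {set T} | (i \notin X) && (X \in F)].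

Definition link F := [set X : {set T} | (i \notin X) && (i |: X \in F)].

Definition glue G H := G :|: [set i |: X | X in H].

Lemma setU1_inj_in H :
  (forall X, X \in H -> i \notin X) -> {in H &, injective (fun X => i |: X)}.
Proof. by move=> iH X Y XH YH eXY; rewrite -(setU1K (iH X XH)) eXY setU1K ?iH. Qed.

Section Glue.
Variables G H : {set {set T}}.
Hypotheses (iG : forall X, X \in G -> i \notin X) (iH : forall X, X \in H -> i \notin X).

Lemma deletion_glue : deletion (glue G H) = G.
Proof.
apply/setP => X; rewrite !inE; case XG: (X \in G); first by rewrite iG.
by apply/andP => -[iX /imsetP[Y _ eX]]; rewrite eX setU11 in iX.
Qed.

Lemma link_glue : link (glue G H) = H.
Proof.
apply/setP => X; rewrite !inE; apply/idP/idP => [/andP[iX /orP[/iG|]]|XH].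
- by rewrite setU11.
- by case/imsetP=> Y YH eXY; rewrite -(setU1K iX) eXY setU1K ?iH.
by rewrite iH //=; apply/orP; right; apply/imsetP; exists X.
Qed.

Lemma card_glue : #|glue G H| = #|G| + #|H|.
Proof.
rewrite cardsU card_in_imset; last exact: setU1_inj_in.
suff -> : G :&: [set i |: X | X in H] = set0 by rewrite cards0 subn0.
apply/setP => X; rewrite !inE; apply/negP => /andP[/iG iX /imsetP[Y _ eX]].
by rewrite eX setU11 in iX.
Qed.

End Glue.

Lemma glue_deletion_link F : glue (deletion F) (link F) = F.
Proof.
apply/setP => X; rewrite !inE; apply/idP/idP => [/orP[/andP[]//|]|XF].
  by case/imsetP=> Y; rewrite inE => /andP[_ YF] ->.
case: (boolP (i \in X)) => iX; last by rewrite XF.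
apply/orP; right; apply/imsetP; exists (X :\ i); last by rewrite setD1K.
by rewrite !inE eqxx /= setD1K.
Qed.

Lemma card_deletion_link F : #|F| = #|deletion F| + #|link F|.
Proof.
by rewrite -card_glue ?glue_deletion_link // => X; rewrite inE => /andP[].
Qed.

Lemma deletion_up_shadow F : deletion (up_shadow predT F) = sh (deletion F).
Proof.
apply/setP => X; rewrite inE; apply/andP/up_shadowP.
  case=> iX /up_shadowP[j [_ jX XjF]]; exists j; split=> //.
    by apply: contraNneq iX => <-.
  by rewrite inE XjF !inE negb_and iX orbT.
case=> j [ji jX]; rewrite inE => /andP[iXj XjF]; split.
  by move: iXj; rewrite !inE negb_and negbK eq_sym (negbTE ji).
by apply/up_shadowP; exists j.
Qed.

Lemma link_up_shadow F : link (up_shadow predT F) = deletion F :|: sh (link F).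
Proof.
have setU1D1 X j : j != i -> (i |: X) :\ j = i |: (X :\ j).
  by move=> ji; apply/setP => y; rewrite !inE; case: eqVneq => // ->; rewrite (negbTE ji).
apply/setP => X; rewrite inE in_setU; apply/andP/orP.
  case=> iX /up_shadowP[j [_]]; case: (eqVneq j i) => [-> _|ji].
    by rewrite setU1K // => XF; left; rewrite inE iX.
  rewrite in_setU1 (negbTE ji) setU1D1 // => jX FXj; right.
  apply/up_shadowP; exists j; split=> //.
  by rewrite inE FXj !inE negb_and iX orbT.
case=> [|/up_shadowP[j [ji jX]]]; rewrite inE.
  by case/andP=> iX XF; split=> //; apply/up_shadowP; exists i; rewrite setU11 setU1K.
case/andP=> iXj FiXj; have iX : i \notin X.
  by move: iXj; rewrite !inE negb_and negbK eq_sym (negbTE ji).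
split=> //; apply/up_shadowP; exists j; rewrite !inE jX orbT setU1D1 //.
Qed.

Lemma card_up_shadow F :
  #|up_shadow predT F| = #|sh (deletion F)| + #|deletion F :|: sh (link F)|.
Proof. by rewrite card_deletion_link deletion_up_shadow link_up_shadow. Qed.

End DeletionLink.

Import GRing.Theory.

Section Monomials.
Variables (K : fieldType) (n : nat).
Local Open Scope ring_scope.
Implicit Types (A B W : {set {set 'I_n}}) (M N : {set 'I_n}) (j : 'I_n).

HB.instance Definition _ j :=
  GRing.isLinear.Build K (Rvec K n) (Rvec K n) _ (xmul_fun j) (xmul_fun_linear j).

Definition mono_coef N (f : Rvec K n) : K^o := f N.

Lemma mono_coef_linear N : linear (mono_coef N).
Proof. by move=> a f g; rewrite /mono_coef !ffunE. Qed.

HB.instance Definition _ N :=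
  GRing.isLinear.Build K (Rvec K n) K^o _ (mono_coef N) (mono_coef_linear N).

Lemma xmul_mono j M : xmul K j (mono K M) = if j \in M then 0 else mono K (j |: M).
Proof.
rewrite lfunE; apply/ffunP => N; rewrite !ffunE.
case: ifPn => jN; case: ifPn => jM; rewrite ?ffunE //.
- by case: eqP => // eNM; rewrite -eNM setD11 in jM.
- suff -> : (N :\ j == M) = (N == j |: M) by [].
  by apply/eqP/eqP => [<-|->]; rewrite ?setD1K ?setU1K.
- by case: eqP => // eN; rewrite eN setU11 in jN.
Qed.

Lemma mono_mem_span N (s : seq {set 'I_n}) :
  mono K N \in <<[seq mono K M | M <- s]>>%VS -> N \in s.
Proof.
apply: contraTT => Ns.
have span_ker : (<<[seq mono K M | M <- s]>> <= lker (linfun (mono_coef N)))%VS.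
  apply/span_subvP => _ /mapP[M Ms ->]; rewrite memv_ker lfunE /= /mono_coef ffunE.
  by case: (N =P M) Ns => [->|_ _]; rewrite ?Ms ?eqxx.
apply/negP => /(subvP span_ker); rewrite memv_ker lfunE /= /mono_coef ffunE eqxx.
by rewrite oner_eq0.
Qed.

Lemma free_monos (s : seq {set 'I_n}) : uniq s -> free [seq mono K M | M <- s].
Proof.
elim: s => [|M s IH] /=; first by rewrite nil_free.
case/andP=> Ms us; rewrite free_cons IH // andbT.
by apply: contra Ms; apply: mono_mem_span.
Qed.

Lemma dim_mspan A : \dim (mspan K A) = #|A|.
Proof. by rewrite /mspan (eqP (free_monos (enum_uniq (mem A)))) size_map -cardE. Qed.

Lemma mono_mspan N A : (mono K N \in mspan K A) = (N \in A).
Proof.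
apply/idP/idP => [/mono_mem_span|NA]; first by rewrite mem_enum.
by apply: memv_span; apply/mapP; exists N; rewrite ?mem_enum.
Qed.

Lemma subv_mspan A B : (mspan K A <= mspan K B)%VS = (A \subset B).
Proof.
apply/idP/subsetP => [/subvP AB N|AB].
  by rewrite -!(mono_mspan N) => /AB.
by apply/span_subvP => _ /mapP[M MA ->]; rewrite mono_mspan AB // -mem_enum.
Qed.

Lemma up_shadow_mspan (P : pred 'I_n) A :
  (\sum_(j | P j) (xmul K j @: mspan K A))%VS = mspan K (up_shadow P A).
Proof.
apply/eqP; rewrite eqEsubv; apply/andP; split.
  apply/subv_sumP => j Pj; rewrite /mspan limg_span; apply/span_subvP => v.
  rewrite -map_comp => /mapP[M MA ->] /=; rewrite xmul_mono.
  case: ifPn => jM; first exact: mem0v.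
  by rewrite mono_mspan setU1_up_shadow // -mem_enum.
apply/span_subvP => v /mapP[X]; rewrite mem_enum => /up_shadowP[j [Pj jX XjA]] ->.
apply: (sumv_sup j Pj); apply/memv_imgP; exists (mono K (X :\ j)).
  by rewrite mono_mspan.
by rewrite xmul_mono setD11 setD1K.
Qed.

Lemma m1_mspan A : m1 (mspan K A) = mspan K (up_shadow predT A).
Proof. exact: up_shadow_mspan. Qed.

Lemma n1_mspan i A : n1 i (mspan K A) = mspan K (up_shadow (predC1 i) A).
Proof. exact: up_shadow_mspan. Qed.

Lemma gotzmann_mspan d A : gotzmann d (mspan K A) ->
  forall W, W \subset [set M : {set 'I_n} | #|M| == d] -> #|W| = #|A| ->
  (#|up_shadow predT A| <= #|up_shadow predT W|)%N.
Proof.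
case=> _ Amin W Wd cardW; have := Amin (mspan K W).
by rewrite !m1_mspan !dim_mspan /Rdeg subv_mspan; apply.
Qed.

End Monomials.

Lemma up_shadow_link_sub_deletion n (i : 'I_n) d (A : {set {set 'I_n}}) :
  (forall M, M \in A -> #|M| = d.+1) ->
  (forall W : {set {set 'I_n}}, W \subset [set M : {set 'I_n} | #|M| == d.+1] ->
     #|W| = #|A| -> #|up_shadow predT A| <= #|up_shadow predT W|) ->
  up_shadow (predC1 i) (lexseg i d #|link i A|)
    \subset lexseg i d.+1 #|deletion i A| ->
  up_shadow (predC1 i) (link i A) \subset deletion i A.
Proof.
move=> Ad Amin shL; set A0 := deletion i A; set A1 := link i A.
have A0Q : A0 \subset Qmonos i d.+1.
  by apply/subsetP => X; rewrite !inE => /andP[-> /Ad ->] /=.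
have A1Q : A1 \subset Qmonos i d.
  apply/subsetP => X; rewrite !inE => /andP[iX /Ad].
  by rewrite cardsU1 iX add1n => -[->]; rewrite eqxx.
have [cardL0 shL0] := kruskal_katona A0Q; have [cardL1 _] := kruskal_katona A1Q.
set L0 := lexseg i d.+1 #|A0| in shL cardL0 shL0; set L1 := lexseg i d #|A1| in shL cardL1.
have avoid e k X : X \in lexseg i e k -> i \notin X by rewrite !inE => /andP[/andP[]].
have Ld : glue i L0 L1 \subset [set M : {set 'I_n} | #|M| == d.+1].
  apply/subsetP => X; rewrite !inE => /orP[/andP[/andP[_ ->]]//|/imsetP[Y]].
  by rewrite !inE => /andP[/andP[iY /eqP <-] _] ->; rewrite cardsU1 iY.
have cardL : #|glue i L0 L1| = #|A|.
  by rewrite card_glue ?cardL0 ?cardL1 -?card_deletion_link //; apply: avoid.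
have := Amin _ Ld cardL; rewrite !(card_up_shadow i).
rewrite deletion_glue ?link_glue ?(setUidPl shL) ?cardL0; try exact: avoid.
move=> le; have {le} : #|A0 :|: up_shadow (predC1 i) A1| <= #|A0|.
  by rewrite -(leq_add2l #|up_shadow (predC1 i) A0|) (leq_trans le) ?leq_add2r.
by move=> le; apply/setUidPl/eqP; rewrite eq_sym eqEcard subsetUl.
Qed.

Theorem lemma4p7 (K : fieldType) (n d : nat) (V : {vspace Rvec K n}) (i : 'I_n) :
  monomial_space d V ->
  gotzmann d V ->
  (n1 i (L1 i d V) <= L0 i d V)%VS ->
  forall M : {set 'I_n}, mono K M \in V -> i \in M ->
  forall j : 'I_n, j \notin M -> mono K (j |: (M :\ i)) \in V.
Proof.
move=> [A Ad ->] gotzA shL M MA iM j jM; rewrite mono_mspan in MA; rewrite mono_mspan.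
have E0 : V0monos i (mspan K A) = deletion i A.
  by apply/setP => X; rewrite !inE mono_mspan.
have E1 : V1monos i (mspan K A) = link i A.
  by apply/setP => X; rewrite !inE mono_mspan.
case: d Ad gotzA shL => [|d] Ad gotzA shL.
  by move/eqP: (Ad M MA); rewrite cards_eq0 => /eqP M0; rewrite M0 inE in iM.
rewrite /L0 /L1 n1_mspan E0 E1 subv_mspan in shL.
have sub := up_shadow_link_sub_deletion Ad (gotzmann_mspan gotzA) shL.
have ji : j != i by apply: contraNneq jM => ->.
suff : j |: (M :\ i) \in deletion i A by rewrite inE => /andP[].
apply: (subsetP sub); apply: setU1_up_shadow => //.
  by rewrite !inE negb_and jM orbT.
by rewrite !inE eqxx /= setD1K.
Qed.
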